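(* Let $x>1/2$ and define $\rho_x(G)=\max(\rho(G),x)$ for graphs $G$. Then for all edge-neighboring graphs $G,G'$, $|\rho_x(G)-\rho_x(G')|\le\frac{1}{2x-1}$.
   Context: Graphs are simple undirected with vertex set $V$. For nonempty $S\subseteq V$, $\rho(S)=|E(S)|/|S|$ where $E(S)$ is the set of edges with both endpoints in $S$, and $\rho(G)=\max_{\emptyset\ne S\subseteq V}\rho(S)$. Two graphs are edge-neighboring if they have the same vertex set and their edge sets differ in exactly one edge. *)

From mathcomp Require Import all_boot all_order all_algebra.
Set Implicit Arguments. Unset Strict Implicit. Unset Printing Implicit Defensive.
Import Order.TTheory GRing.Theory Num.Theory.
Local Open Scope ring_scope.

(* A simple undirected graph on the finite vertex type V is given by its edge
   set E : {set {set V}}, every edge being a 2-element subset of V. *)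
Definition simple_graph (V : finType) (E : {set {set V}}) : bool :=
  [forall e in E, #|e| == 2%N].

Definition induced_edges (V : finType) (E : {set {set V}}) (S : {set V})
  : {set {set V}} := [set e in E | e \subset S].

Definition density (R : realFieldType) (V : finType) (E : {set {set V}})
  (S : {set V}) : R := (#|induced_edges E S|)%:R / (#|S|)%:R.

(* rho(G) = max over nonempty S of rho(S) (0 if V is empty). *)
Definition max_density (R : realFieldType) (V : finType) (E : {set {set V}}) : R :=
  \big[Num.max/0]_(S : {set V} | S != set0) density R E S.

Definition rho_x (R : realFieldType) (x : R) (V : finType) (E : {set {set V}}) : R :=
  Num.max (max_density R E) x.

Definition edge_neighboring (V : finType) (E E' : {set {set V}}) : bool :=
  #|(E :\: E') :|: (E' :\: E)| == 1%N.

From mathcomp Require Import all_boot all_order all_algebra.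
From mathcomp Require Import lra zify.
Import Order.TTheory GRing.Theory Num.Theory.
Local Open Scope ring_scope.

(* Adding one edge raises the density of a set S by at most 1/|S|, and it can
   only push the density of S above x if |S| > 2x + 1, because a simple graph
   has density at most (|S| - 1)/2 on S.  Hence the maximum of the densities and
   x grows by at most 1/(2x - 1); removing an edge can only decrease it. *)

Section InducedEdges.

Context {V : finType}.
Implicit Types (E F : {set {set V}}) (S : {set V}).

Lemma induced_edgesS E F S :
  E \subset F -> induced_edges E S \subset induced_edges F S.
Proof.
move=> sEF; apply/subsetP => e; rewrite !inE => /andP[eE ->].
by rewrite (subsetP sEF).
Qed.

Lemma card_induced_edges_leD E F S :
  (#|induced_edges F S| <= #|induced_edges E S| + #|F :\: E|)%N.
Proof.
apply: leq_trans (leq_card_setU _ _); apply: subset_leq_card.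
by apply/subsetP => e; rewrite !inE => /andP[-> ->]; rewrite !andbT orbN.
Qed.

Lemma card_induced_edges_simple {E} S : simple_graph E ->
  (2 * #|induced_edges E S| <= #|S| * (#|S|).-1)%N.
Proof.
move=> /forallP simpleE.
have le_bin : (#|induced_edges E S| <= 'C(#|S|, 2))%N.
  rewrite -cards_draws; apply: subset_leq_card; apply/subsetP => e.
  rewrite !inE => /andP[eE ->] /=.
  by have := simpleE e; rewrite eE.
rewrite bin2 in le_bin.
have := odd_double_half (#|S| * (#|S|).-1).
rewrite -muln2 in le_bin *; lia.
Qed.

End InducedEdges.

Section Densities.

Context {R : realFieldType} {V : finType}.
Implicit Types (E F : {set {set V}}) (S : {set V}) (x c : R).

Lemma densityS {E F} S : E \subset F -> density R E S <= density R F S.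
Proof.
move=> sEF; rewrite /density ler_wpM2r ?invr_ge0 ?ler0n // ler_nat.
exact/subset_leq_card/induced_edgesS.
Qed.

Lemma density_leD E F S :
  density R F S <= density R E S + (#|F :\: E|)%:R / (#|S|)%:R.
Proof.
rewrite /density -mulrDl ler_wpM2r ?invr_ge0 ?ler0n // -natrD ler_nat.
exact: card_induced_edges_leD.
Qed.

Lemma density_le_half_pred {E S} : simple_graph E -> S != set0 ->
  density R E S <= ((#|S|)%:R - 1) / 2.
Proof.
move=> simpleE; rewrite -card_gt0 => S_gt0.
have k_gt0 : (0 : R) < (#|S|)%:R by rewrite ltr0n.
have := card_induced_edges_simple S simpleE.
rewrite -(ler_nat R) !natrM -subn1 natrB // => bound.
rewrite /density ler_pdivrMr //; nra.
Qed.

Lemma density_le_rho_x x {E S} : S != set0 -> density R E S <= rho_x x E.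
Proof.
by move=> S0; rewrite /rho_x le_max /max_density (bigD1 S) //= le_max lexx.
Qed.

Lemma x_le_rho_x x E : x <= rho_x x E.
Proof. by rewrite /rho_x le_max lexx orbT. Qed.

Lemma rho_x_le x c E : 0 <= x -> x <= c ->
  (forall S, S != set0 -> density R E S <= c) -> rho_x x E <= c.
Proof.
move=> x_ge0 xc dens_le; rewrite /rho_x ge_max xc andbT /max_density.
apply: (big_ind (fun v => v <= c)) => //; first exact: le_trans xc.
by move=> a b a_le b_le; rewrite ge_max a_le b_le.
Qed.

Lemma rho_xS x {E F} : 0 <= x -> E \subset F -> rho_x x E <= rho_x x F.
Proof.
move=> x_ge0 sEF; apply: rho_x_le => // [|S S0]; first exact: x_le_rho_x.
exact: le_trans (densityS S sEF) (density_le_rho_x x S0).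
Qed.

Lemma rho_x_leD x E {F} : 1 / 2 < x -> simple_graph F ->
  rho_x x F <= rho_x x E + (#|F :\: E|)%:R / (2 * x - 1).
Proof.
move=> x_gt simpleF; set n : R := (#|F :\: E|)%:R.
have n_ge0 : 0 <= n by rewrite ler0n.
have d_gt0 : 0 < 2 * x - 1 by lra.
have incr_ge0 : 0 <= n / (2 * x - 1) by rewrite divr_ge0 // ltW.
have x_le := x_le_rho_x x E.
apply: rho_x_le; [lra | lra | move=> S S0].
have [dens_le|x_lt] := lerP (density R F S) x; first lra.
have k_gt : 2 * x - 1 < (#|S|)%:R.
  by have := density_le_half_pred simpleF S0; lra.
have incr_le : n / (#|S|)%:R <= n / (2 * x - 1).
  by rewrite ler_wpM2l // lef_pV2 ?posrE ?(ltW k_gt) // (lt_trans d_gt0 k_gt).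
have := density_leD E F S; have := density_le_rho_x x (E := E) S0; lra.
Qed.

End Densities.

Lemma edge_neighboringP (V : finType) (E F : {set {set V}}) :
  edge_neighboring E F ->
  (E \subset F /\ #|F :\: E| = 1%N) \/ (F \subset E /\ #|E :\: F| = 1%N).
Proof.
move=> /eqP card1.
have disj : (E :\: F) :&: (F :\: E) = set0.
  by apply/setP => e; rewrite !inE; case: (e \in E); case: (e \in F).
rewrite cardsU disj cards0 subn0 in card1.
rewrite -!setD_eq0 -!cards_eq0; lia.
Qed.

Theorem mainTheorem13 (R : realFieldType) (x : R) (V : finType)
  (E E' : {set {set V}}) :
  1 / 2 < x -> simple_graph E -> simple_graph E' -> edge_neighboring E E' ->
  `| rho_x x E - rho_x x E' | <= 1 / (2 * x - 1).
Proof.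
move=> x_gt simpleE simpleE' /edge_neighboringP neighbors.
have x_ge0 : 0 <= x by lra.
rewrite ler_norml; apply/andP.
case: neighbors => [[sEE' card1] | [sE'E card1]].
- have := rho_x_leD x E x_gt simpleE'; have := rho_xS x x_ge0 sEE'.
  rewrite card1; split; lra.
- have := rho_x_leD x E' x_gt simpleE; have := rho_xS x x_ge0 sE'E.
  rewrite card1; split; lra.
Qed.
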